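(* Assume the standing assumptions and, in addition, that $f$ is $\rho$-strongly convex for some $\rho>0$. Suppose $(D)$ has an optimal solution $p^*$ (a minimizer of $\theta$) with $\|p^*\|\le R$, $R>0$. Let $\kappa>0$ and let $(p_k)_{k\ge0}$ be generated by the fast gradient method applied to $\theta_\kappa$. Then for all $k\ge0$, $$\theta(p_k)-\theta(p^* )\le\frac\kappa2R^2+\frac{25}{8}\bigl(\theta(0)-\theta(p^* )\bigr)e^{-\frac k2\sqrt{\kappa/L(\kappa)}},$$ $$\|\nabla\theta(p_k)\|\le 2\sqrt{L(\kappa)\bigl(\theta(0)-\theta(p^* )\bigr)}\,e^{-\frac k2\sqrt{\kappa/L(\kappa)}}+2\kappa R .$$
   Context: Standing assumptions: $\mathcal{H}$ is a real Hilbert space; $f:\mathcal{H}\to\mathbb{R}\cup\{+\infty\}$ is proper, convex, lower semicontinuous with bounded effective domain; $g:\mathbb{R}^m\to\mathbb{R}\cup\{+\infty\}$ is proper, lower semicontinuous and $\mu$-strongly convex for some $\mu>0$; $A:\mathcal{H}\to\mathbb{R}^m$ is linear and continuous with $A(\operatorname{dom} f)\cap\operatorname{dom} g\neq\emptyset$. $(D)$ is $\sup_p\{-f^*(A^*p)-g^*(-p)\}$. $\theta(p):=f^*(A^*p)+g^*(-p)$ (differentiable here). $\theta_\kappa(p):=\theta(p)+\frac\kappa2\|p\|^2$, and $L(\kappa):=\frac{\|A\|^2}{\rho}+\frac1\mu+\kappa$ (a Lipschitz constant of $\nabla\theta_\kappa$). Fast gradient method on $\theta_\kappa$: $w_0=p_0=0$,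 $p_{k+1}=w_k-\frac{1}{L(\kappa)}\nabla\theta_\kappa(w_k)$, $w_{k+1}=p_{k+1}+\frac{\sqrt{L(\kappa)}-\sqrt\kappa}{\sqrt{L(\kappa)}+\sqrt\kappa}(p_{k+1}-p_k)$. *)

From Stdlib Require Import Reals Lra ClassicalEpsilon.
From Stdlib Require Vectors.Fin.
Open Scope R_scope.

Record IPS := {
  car :> Type;
  vadd : car -> car -> car;
  vzero : car;
  vopp : car -> car;
  vscal : R -> car -> car;
  inner : car -> car -> R
}.
Arguments vadd {i}. Arguments vzero {i}. Arguments vopp {i}.
Arguments vscal {i}. Arguments inner {i}.

Definition vsub {V : IPS} (x y : V) : V := vadd x (vopp y).
Definition nrm {V : IPS} (x : V) : R := sqrt (inner x x).

Definition converges {V : IPS} (u : nat -> V) (x : V) : Prop :=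
  forall eps, 0 < eps -> exists N, forall n, (N <= n)%nat -> nrm (vsub (u n) x) < eps.

Definition cauchy {V : IPS} (u : nat -> V) : Prop :=
  forall eps, 0 < eps -> exists N, forall n k, (N <= n)%nat -> (N <= k)%nat ->
    nrm (vsub (u n) (u k)) < eps.

Definition is_real_hilbert (V : IPS) : Prop :=
  (forall x y z : V, vadd x (vadd y z) = vadd (vadd x y) z) /\
  (forall x y : V, vadd x y = vadd y x) /\
  (forall x : V, vadd x vzero = x) /\
  (forall x : V, vadd x (vopp x) = vzero) /\
  (forall (a b : R) (x : V), vscal a (vscal b x) = vscal (a * b) x) /\
  (forall x : V, vscal 1 x = x) /\
  (forall (a : R) (x y : V), vscal a (vadd x y) = vadd (vscal a x) (vscal a y)) /\
  (forall (a b : R) (x : V), vscal (a + b) x = vadd (vscal a x) (vscal b x)) /\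
  (forall x y : V, inner x y = inner y x) /\
  (forall x y z : V, inner (vadd x y) z = inner x z + inner y z) /\
  (forall (a : R) (x y : V), inner (vscal a x) y = a * inner x y) /\
  (forall x : V, 0 <= inner x x) /\
  (forall x : V, inner x x = 0 -> x = vzero) /\
  (forall u : nat -> V, cauchy u -> exists x, converges u x).

Fixpoint fsum (m : nat) : (Fin.t m -> R) -> R :=
  match m with
  | O => fun _ => 0
  | S n => fun f => f Fin.F1 + fsum n (fun i => f (Fin.FS i))
  end.

Definition Euclid (m : nat) : IPS := {|
  car := Fin.t m -> R;
  vadd := fun u v i => u i + v i;
  vzero := fun _ => 0;
  vopp := fun u i => - u i;
  vscal := fun a u i => a * u i;
  inner := fun u v => fsum m (fun i => u i * v i)
|}.

(** Supremum of a set of reals (meaningful when the set is nonempty and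
    bounded above, which is the case wherever it is used below). *)
Definition Rsup (E : R -> Prop) : R :=
  epsilon (inhabits 0) (fun s => is_lub E s).

(** Extended reals R ∪ {+∞}. *)
Inductive ER := ERfin (r : R) | ERinf.

Definition dom {V : IPS} (f : V -> ER) (x : V) : Prop := exists a, f x = ERfin a.

Definition proper {V : IPS} (f : V -> ER) : Prop := exists x, dom f x.

Definition convex {V : IPS} (f : V -> ER) : Prop :=
  forall (x y : V) (l a b : R), 0 < l < 1 -> f x = ERfin a -> f y = ERfin b ->
    exists c, f (vadd (vscal l x) (vscal (1 - l) y)) = ERfin c /\
              c <= l * a + (1 - l) * b.

(** rho-strong convexity (equivalently: f - rho/2 ||.||^2 convex). *)
Definition strongly_convex {V : IPS} (rho : R) (f : V -> ER) : Prop :=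
  forall (x y : V) (l a b : R), 0 < l < 1 -> f x = ERfin a -> f y = ERfin b ->
    exists c, f (vadd (vscal l x) (vscal (1 - l) y)) = ERfin c /\
              c <= l * a + (1 - l) * b - rho / 2 * l * (1 - l) * (nrm (vsub x y)) ^ 2.

(** Lower semicontinuity (norm topology): all sublevel sets are
    (sequentially) closed. *)
Definition lsc {V : IPS} (f : V -> ER) : Prop :=
  forall (u : nat -> V) (x : V) (t : R), converges u x ->
    (forall n, exists a, f (u n) = ERfin a /\ a <= t) ->
    exists a, f x = ERfin a /\ a <= t.

Definition bounded_dom {V : IPS} (f : V -> ER) : Prop :=
  exists M, forall x, dom f x -> nrm x <= M.

Definition linear_map {U V : IPS} (A : U -> V) : Prop :=
  (forall x y, A (vadd x y) = vadd (A x) (A y)) /\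
  (forall a x, A (vscal a x) = vscal a (A x)).

Definition continuous_map {U V : IPS} (A : U -> V) : Prop :=
  forall u x, converges u x -> converges (fun n => A (u n)) (A x).

Definition is_adjoint {U V : IPS} (A : U -> V) (As : V -> U) : Prop :=
  forall x p, inner (A x) p = inner x (As p).

Definition op_norm {U V : IPS} (A : U -> V) : R :=
  Rsup (fun r => exists x, nrm x <= 1 /\ r = nrm (A x)).

Definition fconj {V : IPS} (f : V -> ER) (y : V) : R :=
  Rsup (fun r => exists x a, f x = ERfin a /\ r = inner y x - a).

Definition has_gradient {m : nat} (th : Euclid m -> R) (p v : Euclid m) : Prop :=
  forall eps, 0 < eps -> exists delta, 0 < delta /\
    forall h : Euclid m, 0 < nrm h < delta ->
      Rabs (th (vadd p h) - th p - inner v h) <= eps * nrm h.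

Definition grad {m : nat} (th : Euclid m -> R) (p : Euclid m) : Euclid m :=
  epsilon (inhabits (fun _ => 0)) (has_gradient th p).

Definition theta {H : IPS} {m : nat} (f : H -> ER) (g : Euclid m -> ER)
  (As : Euclid m -> H) (p : Euclid m) : R :=
  fconj f (As p) + fconj g (vopp p).

Definition theta_k {H : IPS} {m : nat} (f : H -> ER) (g : Euclid m -> ER)
  (As : Euclid m -> H) (kappa : R) (p : Euclid m) : R :=
  theta f g As p + kappa / 2 * (nrm p) ^ 2.

Definition Lk {H : IPS} {m : nat} (A : H -> Euclid m) (rho mu kappa : R) : R :=
  (op_norm A) ^ 2 / rho + 1 / mu + kappa.

Definition fgm_iterates {H : IPS} {m : nat} (f : H -> ER) (g : Euclid m -> ER)
  (A : H -> Euclid m) (As : Euclid m -> H) (rho mu kappa : R)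
  (p w : nat -> Euclid m) : Prop :=
  let L := Lk A rho mu kappa in
  p O = vzero /\ w O = vzero /\
  (forall k, p (S k) = vsub (w k) (vscal (1 / L) (grad (theta_k f g As kappa) (w k)))) /\
  (forall k, w (S k) = vadd (p (S k))
      (vscal ((sqrt L - sqrt kappa) / (sqrt L + sqrt kappa)) (vsub (p (S k)) (p k)))).

From Stdlib Require Import Reals Lra Lia Rcomplete.
From Stdlib Require Import Classical ClassicalEpsilon FunctionalExtensionality.
Open Scope R_scope.

(** Everything is phrased through one notion,
    [smooth_strongly_convex th Gr s L]: at every point, [th] lies between its
    first-order model with slope [Gr] plus [s/2 |.|^2] and plus [L/2 |.|^2].
    1. The conjugate of a proper lsc [rho]-strongly convex function attains
       its supremum at a point [conj_point], and is convex and
       [(1/rho)]-smooth with gradient [conj_point] ([conj_smooth]).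
    2. The notion is stable under sums and precomposition with the adjoint
       of a bounded linear map, so the dual objective [theta] is convex and
       [|A|^2/rho + 1/mu]-smooth ([dual_smooth]) and [theta_kappa] is
       [kappa]-strongly convex and [Lk]-smooth; in [R^m] the slope of the
       models is the gradient ([smooth_grad]).
    3. Nesterov's estimate-sequence argument shows that a Lyapunov function
       contracts by [1 - sqrt(kappa/L)] per step ([fgm_convergence]).
    4. Comparing with [pstar] bounds the objective gap; comparing with the
       minimizer of [theta_kappa] (which exists by step 1 applied to
       [theta_kappa] itself) through cocoercivity bounds the gradient
       ([regularized_objective_bound], [regularized_gradient_bound]).
    The main theorem combines these with [(1 - a)^k <= exp(-k a)]. *)

Lemma le_of_le_plus_eps (a b : R) : (forall e, 0 < e -> a <= b + e) -> a <= b.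
Proof.
  intro hab. destruct (Rle_dec a b) as [h|h]; auto.
  specialize (hab ((a - b) / 2)). lra.
Qed.

Lemma le_of_le_shrink (c d : R) : (forall l, 0 < l < 1 -> (1 - l) * c <= d) -> c <= d.
Proof.
  intro hcd. apply le_of_le_plus_eps. intros e he.
  set (l := Rmin (1 / 2) (e / (Rabs c + 1))).
  assert (hl0 : 0 < l)
    by (apply Rmin_pos; [lra | apply Rdiv_lt_0_compat; pose proof (Rabs_pos c); lra]).
  assert (hl1 : l <= 1 / 2) by apply Rmin_l.
  assert (hle : l * (Rabs c + 1) <= e).
  { assert (l <= e / (Rabs c + 1)) by apply Rmin_r.
    pose proof (Rabs_pos c).
    replace e with (e / (Rabs c + 1) * (Rabs c + 1)) by (field; lra).
    apply Rmult_le_compat_r; lra. }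
  specialize (hcd l ltac:(lra)). pose proof (Rle_abs c). pose proof (Rabs_pos c). nra.
Qed.

Lemma inv_succ_pos (n : nat) : 0 < / (INR n + 1).
Proof. apply Rinv_0_lt_compat. pose proof (pos_INR n). lra. Qed.

Lemma inv_succ_small (eps : R) : 0 < eps -> exists N : nat, / (INR N + 1) < eps.
Proof.
  intro he. destruct (INR_unbounded (/ eps)) as [N hN]. exists N.
  rewrite <- (Rinv_inv eps). apply Rinv_lt_contravar.
  - apply Rmult_lt_0_compat; [apply Rinv_0_lt_compat; lra | pose proof (pos_INR N); lra].
  - lra.
Qed.

Lemma inv_succ_antitone (n N : nat) : (N <= n)%nat -> / (INR n + 1) <= / (INR N + 1).
Proof.
  intro hNn. apply Rinv_le_contravar; [pose proof (pos_INR N); lra |].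
  apply le_INR in hNn. lra.
Qed.

Lemma pow_le_exp (a : R) (k : nat) : 0 <= a <= 1 -> (1 - a) ^ k <= exp (- INR k * a).
Proof.
  intro ha. induction k as [|k IH].
  - simpl. rewrite Ropp_0, Rmult_0_l, exp_0. lra.
  - rewrite S_INR. replace (- (INR k + 1) * a) with (- a + - INR k * a) by ring.
    rewrite exp_plus. simpl. pose proof (exp_ineq1_le (- a)).
    apply Rmult_le_compat; try lra. apply pow_le. lra.
Qed.

Lemma rate_le_exp (a : R) (k : nat) : 0 <= a <= 1 ->
  (1 - a) ^ k <= exp (- (INR k / 2) * a) ^ 2 /\
  exp (- (INR k / 2) * a) ^ 2 <= exp (- (INR k / 2) * a).
Proof.
  intro ha. set (E := exp (- (INR k / 2) * a)).
  assert (hE2 : E ^ 2 = exp (- INR k * a)).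
  { unfold E. simpl. rewrite Rmult_1_r, <- exp_plus. f_equal. field. }
  assert (hE1 : E <= 1).
  { unfold E. rewrite <- exp_0.
    assert (0 <= INR k / 2 * a) by (pose proof (pos_INR k); apply Rmult_le_pos; lra).
    destruct (Req_dec (INR k / 2 * a) 0) as [h0 | h0].
    - replace (- (INR k / 2) * a) with 0 by lra. lra.
    - left. apply exp_increasing. lra. }
  assert (hE0 : 0 < E) by apply exp_pos.
  split; [rewrite hE2; apply pow_le_exp, ha | nra].
Qed.

Lemma sqrt_ratio_unit (kappa L0 : R) : 0 < kappa -> 0 < L0 -> 0 <= sqrt (kappa / (L0 + kappa)) <= 1.
Proof.
  intros hk hL. split; [apply sqrt_pos |]. rewrite <- sqrt_1. apply sqrt_le_1_alt.
  apply Rmult_le_reg_r with (L0 + kappa); [lra |]. field_simplify; lra.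
Qed.

Lemma sqrt_rate_bound (Lp L q E D : R) : 0 <= Lp <= L -> 0 <= q <= E ^ 2 -> 0 <= E -> 0 <= D ->
  sqrt (2 * Lp * q * D) <= 2 * sqrt (L * D) * E.
Proof.
  intros hL hq hE hD. assert (hLD : 0 <= L * D) by (apply Rmult_le_pos; lra).
  rewrite <- (sqrt_pow2 (2 * sqrt (L * D) * E))
    by (apply Rmult_le_pos; [apply Rmult_le_pos; [lra | apply sqrt_pos] | lra]).
  apply sqrt_le_1_alt. rewrite !Rpow_mult_distr, pow2_sqrt by exact hLD.
  assert (q * D <= E ^ 2 * D) by (apply Rmult_le_compat_r; lra).
  assert (0 <= q * D) by (apply Rmult_le_pos; lra).
  nra.
Qed.

Lemma Rsup_eq (E : R -> Prop) (s : R) : is_lub E s -> Rsup E = s.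
Proof.
  intro hs. unfold Rsup.
  destruct (epsilon_spec (inhabits 0) (fun s => is_lub E s) (ex_intro _ s hs)) as [h1 h2].
  destruct hs as [h3 h4]. apply Rle_antisym; auto.
Qed.

(** Elementary geometry of a real Hilbert space. *)

Section HilbertSpace.
Context {V : IPS} (hV : is_real_hilbert V).

Lemma inner_sym (x y : V) : inner x y = inner y x.
Proof. destruct hV as (_&_&_&_&_&_&_&_&h&_). exact (h x y). Qed.
Lemma inner_addl (x y z : V) : inner (vadd x y) z = inner x z + inner y z.
Proof. destruct hV as (_&_&_&_&_&_&_&_&_&h&_). exact (h x y z). Qed.
Lemma inner_scall (a : R) (x y : V) : inner (vscal a x) y = a * inner x y.
Proof. destruct hV as (_&_&_&_&_&_&_&_&_&_&h&_). exact (h a x y). Qed.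
Lemma inner_pos (x : V) : 0 <= inner x x.
Proof. destruct hV as (_&_&_&_&_&_&_&_&_&_&_&h&_). exact (h x). Qed.
Lemma inner_zero_eq (x : V) : inner x x = 0 -> x = vzero.
Proof. destruct hV as (_&_&_&_&_&_&_&_&_&_&_&_&h&_). exact (h x). Qed.
Lemma hilbert_complete (u : nat -> V) : cauchy u -> exists x, converges u x.
Proof. destruct hV as (_&_&_&_&_&_&_&_&_&_&_&_&_&h). exact (h u). Qed.

Lemma inner_addr (x y z : V) : inner z (vadd x y) = inner z x + inner z y.
Proof. rewrite inner_sym, inner_addl, (inner_sym x), (inner_sym y). ring. Qed.
Lemma inner_scalr (a : R) (x y : V) : inner y (vscal a x) = a * inner y x.
Proof. rewrite inner_sym, inner_scall, inner_sym. ring. Qed.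
Lemma inner_zerol (y : V) : inner vzero y = 0.
Proof.
  destruct hV as (_&_&hz&_).
  assert (h := inner_addl vzero vzero y). rewrite hz in h. lra.
Qed.
Lemma inner_zeror (y : V) : inner y vzero = 0.
Proof. rewrite inner_sym. apply inner_zerol. Qed.
Lemma inner_oppl (x y : V) : inner (vopp x) y = - inner x y.
Proof.
  destruct hV as (_&_&_&hopp&_).
  assert (h := inner_addl x (vopp x) y). rewrite hopp, inner_zerol in h. lra.
Qed.
Lemma inner_oppr (x y : V) : inner y (vopp x) = - inner y x.
Proof. rewrite inner_sym, inner_oppl, inner_sym. ring. Qed.
Lemma inner_subl (x y z : V) : inner (vsub x y) z = inner x z - inner y z.
Proof. unfold vsub. rewrite inner_addl, inner_oppl. ring. Qed.
Lemma inner_subr (x y z : V) : inner z (vsub x y) = inner z x - inner z y.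
Proof. unfold vsub. rewrite inner_addr, inner_oppr. ring. Qed.

Lemma nrm_sq (x : V) : nrm x ^ 2 = inner x x.
Proof. unfold nrm. apply pow2_sqrt, inner_pos. Qed.
Lemma nrm_nonneg (x : V) : 0 <= nrm x.
Proof. apply sqrt_pos. Qed.
Lemma nrm_zero : nrm (@vzero V) = 0.
Proof. unfold nrm. rewrite inner_zerol. apply sqrt_0. Qed.
Lemma nrm_eq0 (x : V) : nrm x = 0 -> x = vzero.
Proof. intro h. apply inner_zero_eq. rewrite <- nrm_sq, h. ring. Qed.

Lemma nrm_sub_zero (x : V) : nrm (vsub x vzero) = nrm x.
Proof. unfold nrm. f_equal. rewrite inner_subl, !inner_subr, !inner_zerol, ?inner_zeror. ring. Qed.

Lemma sq_nrm_le (y : V) (r : R) : nrm y <= r -> nrm y ^ 2 <= r ^ 2.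
Proof. intro h. apply pow_incr. split; [apply nrm_nonneg | exact h]. Qed.

Lemma nrm_le_sq (x : V) (r : R) : 0 <= r -> inner x x <= r ^ 2 -> nrm x <= r.
Proof. intros hr h. unfold nrm. rewrite <- (sqrt_pow2 r hr). apply sqrt_le_1_alt. lra. Qed.
Lemma nrm_lt_sq (x : V) (r : R) : 0 <= r -> inner x x < r ^ 2 -> nrm x < r.
Proof.
  intros hr h. unfold nrm. rewrite <- (sqrt_pow2 r hr).
  apply sqrt_lt_1_alt. split; [apply inner_pos | lra].
Qed.

Lemma nrm_scal (a : R) (x : V) : nrm (vscal a x) = Rabs a * nrm x.
Proof.
  unfold nrm. rewrite inner_scall, inner_scalr, <- Rmult_assoc.
  rewrite sqrt_mult_alt by apply Rle_0_sqr.
  change (a * a) with (Rsqr a). rewrite sqrt_Rsqr_abs. reflexivity.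
Qed.

(** Cauchy-Schwarz, from the nonnegativity of [|y - t x|^2] at the optimal [t]. *)
Lemma cauchy_schwarz (x y : V) : inner x y <= nrm x * nrm y.
Proof.
  destruct (Req_dec (inner x x) 0) as [h0|h0].
  - rewrite (inner_zero_eq x h0), inner_zerol, nrm_zero. lra.
  - pose proof (inner_pos x) as hxx. pose proof (inner_pos y) as hyy.
    set (t := inner x y / inner x x).
    assert (hp := inner_pos (vadd y (vscal (- t) x))).
    rewrite inner_addl, !inner_addr, !inner_scall, !inner_scalr, (inner_sym y x) in hp.
    assert (ht : t * inner x x = inner x y) by (unfold t; field; lra).
    assert (hsq : inner x y ^ 2 <= inner x x * inner y y).
    { clearbody t.
      assert (0 <= inner y y - t * inner x y).
      { assert (t * (t * inner x x) = t * inner x y) by (rewrite ht; ring). lra. }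
      assert (0 <= inner x x * (inner y y - t * inner x y)) by (apply Rmult_le_pos; lra).
      nra. }
    assert (hn : 0 <= nrm x * nrm y) by (apply Rmult_le_pos; apply nrm_nonneg).
    assert ((nrm x * nrm y) ^ 2 = inner x x * inner y y)
      by (rewrite Rpow_mult_distr, !nrm_sq; ring).
    nra.
Qed.

Lemma nrm_sub_triangle (a b : V) : nrm a <= nrm (vsub a b) + nrm b.
Proof.
  pose proof (nrm_nonneg (vsub a b)). pose proof (nrm_nonneg b).
  apply nrm_le_sq; [lra |].
  assert (hcs := cauchy_schwarz (vsub a b) b).
  assert (hab := nrm_sq (vsub a b)). assert (hb := nrm_sq b).
  rewrite !inner_subl, !inner_subr, (inner_sym b a) in *. nra.
Qed.

Lemma young (d e : V) (r : R) : 0 < r -> inner d e - r / 2 * inner e e <= inner d d / (2 * r).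
Proof.
  intro hr. assert (hp := inner_pos (vadd d (vscal (- r) e))).
  rewrite inner_addl, !inner_addr, !inner_scall, !inner_scalr, (inner_sym e d) in hp.
  apply Rmult_le_reg_l with (r := 2 * r); [lra |]. field_simplify; lra.
Qed.

Lemma self_add_zero (y : V) : vadd y y = y -> y = vzero.
Proof.
  intro hy. apply inner_zero_eq.
  assert (h := inner_addl y y y). rewrite hy in h. lra.
Qed.

Lemma conv_inner (u : nat -> V) (x c : V) (eps : R) :
  converges u x -> 0 < eps -> exists N, forall n, (N <= n)%nat -> inner c (u n) <= inner c x + eps.
Proof.
  intros hu he. pose proof (nrm_nonneg c).
  assert (he' : 0 < eps / (nrm c + 1)) by (apply Rdiv_lt_0_compat; lra).
  destruct (hu _ he') as [N hN]. exists N. intros n hn. specialize (hN n hn).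
  assert (hcs := cauchy_schwarz c (vsub (u n) x)). rewrite inner_subr in hcs.
  assert (nrm c * nrm (vsub (u n) x) <= nrm c * (eps / (nrm c + 1)))
    by (apply Rmult_le_compat_l; lra).
  assert (nrm c * (eps / (nrm c + 1)) <= eps).
  { apply Rmult_le_reg_r with (nrm c + 1); [lra |]. field_simplify; lra. }
  lra.
Qed.

Lemma conv_tail (u : nat -> V) (x : V) (N : nat) :
  converges u x -> converges (fun n => u (n + N)%nat) x.
Proof.
  intros hu eps he. destruct (hu eps he) as [M hM]. exists M. intros n hn. apply hM. lia.
Qed.

End HilbertSpace.

Ltac inner_expand hV :=
  repeat progress rewrite ?(inner_subl hV), ?(inner_subr hV), ?(inner_addl hV),
    ?(inner_addr hV), ?(inner_scall hV), ?(inner_scalr hV), ?(inner_oppl hV),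
    ?(inner_oppr hV), ?(inner_zerol hV), ?(inner_zeror hV) in *.

Definition smooth_strongly_convex {V : IPS} (th : V -> R) (Gr : V -> V) (s L : R) : Prop :=
  forall p q,
    th p + inner (Gr p) (vsub q p) + s / 2 * inner (vsub q p) (vsub q p) <= th q /\
    th q <= th p + inner (Gr p) (vsub q p) + L / 2 * inner (vsub q p) (vsub q p).

(** Numerical core of the descent step in [unbounded_descent] below: moving the
    fraction [l = r/D] of the way towards a point whose value is [K] below the
    base point gains at least 2, for the explicit [K] used there. *)
Lemma interpolation_gain (r D rho : R) : 0 < r -> r < D -> 0 < rho ->
  2 <= r / D * ((2 / r + rho * r / 2) ^ 2 / (2 * rho) + 2)
       + rho / 2 * (r / D) * (1 - r / D) * D ^ 2.
Proof.
  intros hr hD hrho. set (B := 2 / r + rho * r / 2).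
  assert (hK : B ^ 2 / (2 * rho) + 2 + rho * D ^ 2 / 2 - B * D >= 2).
  { replace (B ^ 2 / (2 * rho) + 2 + rho * D ^ 2 / 2 - B * D)
      with ((B - rho * D) ^ 2 / (2 * rho) + 2) by (field; lra).
    assert (0 <= (B - rho * D) ^ 2 / (2 * rho)).
    { unfold Rdiv. apply Rmult_le_pos; [apply pow2_ge_0 | left; apply Rinv_0_lt_compat; lra]. }
    lra. }
  replace (r / D * (B ^ 2 / (2 * rho) + 2) + rho / 2 * (r / D) * (1 - r / D) * D ^ 2)
    with (r / D * (B ^ 2 / (2 * rho) + 2 + rho * D ^ 2 / 2 - B * D) + 2)
    by (unfold B; field; lra).
  assert (0 < r / D) by (apply Rdiv_lt_0_compat; lra). nra.
Qed.

(** The Fenchel conjugate of a proper, lower semicontinuous, [rho]-strongly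
    convex function: the supremum defining it is attained at a unique point,
    and the conjugate is convex and [(1/rho)]-smooth with that point as gradient. *)

Section ConjugateOfStronglyConvex.
Context {V : IPS} (hV : is_real_hilbert V) (h : V -> ER) (rho : R).
Hypotheses (h_proper : proper h) (h_lsc : lsc h) (rho_pos : 0 < rho)
  (h_sc : strongly_convex rho h).

Definition conj_values (u : V) (r : R) : Prop := exists x a, h x = ERfin a /\ r = inner u x - a.

Definition conj_maximizer (u x0 : V) (a0 : R) : Prop :=
  h x0 = ERfin a0 /\ forall x a, h x = ERfin a -> inner u x - a <= inner u x0 - a0.

Lemma unbounded_descent (u : V) :
  (forall M, exists x a, h x = ERfin a /\ M < inner u x - a) ->
  forall x0 a0 r, h x0 = ERfin a0 -> 0 < r ->
  exists z a, h z = ERfin a /\ nrm (vsub z x0) <= r /\ a - inner u z <= a0 - inner u x0 - 2.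
Proof.
  intros hunb x0 a0 r ha0 hr.
  set (K := (2 / r + rho * r / 2) ^ 2 / (2 * rho) + 2).
  assert (hK : 2 <= K).
  { assert (0 <= (2 / r + rho * r / 2) ^ 2 / (2 * rho)).
    { unfold Rdiv. apply Rmult_le_pos; [apply pow2_ge_0 | left; apply Rinv_0_lt_compat; lra]. }
    unfold K. lra. }
  destruct (hunb (K - (a0 - inner u x0))) as [y [ay [hy hgt]]].
  set (D := nrm (vsub y x0)).
  destruct (Rle_dec D r) as [hD | hD].
  - exists y, ay. repeat split; [exact hy | exact hD | lra].
  - set (l := r / D).
    assert (hl0 : 0 < l) by (apply Rdiv_lt_0_compat; lra).
    assert (hl1 : l < 1).
    { unfold l. apply Rmult_lt_reg_r with D; [lra |]. field_simplify; lra. }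
    destruct (h_sc y x0 l ay a0 (conj hl0 hl1) hy ha0) as [c [hc hcle]].
    exists (vadd (vscal l y) (vscal (1 - l) x0)), c. split; [exact hc | split].
    + apply nrm_le_sq; [lra |].
      replace (inner _ _) with (l ^ 2 * D ^ 2).
      * right. unfold l. field. lra.
      * unfold D. rewrite (nrm_sq hV). inner_expand hV. rewrite (inner_sym hV x0 y). ring.
    + assert (hgain := interpolation_gain r D rho hr ltac:(lra) rho_pos). fold K l in hgain.
      fold D in hcle. inner_expand hV.
      assert (l * (ay - inner u y) <= l * (a0 - inner u x0 - K)) by (apply Rmult_le_compat_l; lra).
      lra.
Qed.

Lemma conj_bounded (u : V) : exists M, forall x a, h x = ERfin a -> inner u x - a <= M.
Proof.
  apply NNPP. intro hnb.
  assert (hunb : forall M, exists x a, h x = ERfin a /\ M < inner u x - a).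
  { intro M. apply NNPP. intro hM. apply hnb. exists M. intros x a hx.
    apply Rnot_lt_le. intro hlt. apply hM. exists x, a. auto. }
  destruct h_proper as [x0 [a0 ha0]].
  assert (hstep : forall n : nat, exists z, exists a, h z = ERfin a /\
            nrm (vsub z x0) <= / (INR n + 1) /\ a - inner u z <= a0 - inner u x0 - 2).
  { intro n. exact (unbounded_descent u hunb x0 a0 _ ha0 (inv_succ_pos n)). }
  destruct (choice _ hstep) as [zs hzs].
  assert (hconv : converges zs x0).
  { intros eps he. destruct (inv_succ_small eps he) as [N hN]. exists N. intros n hn.
    destruct (hzs n) as [a [_ [hd _]]]. pose proof (inv_succ_antitone n N hn). lra. }
  destruct (conv_inner hV zs x0 u 1 hconv Rlt_0_1) as [N hN].
  destruct (h_lsc (fun n => zs (n + N)%nat) x0 (a0 - 1) (conv_tail zs x0 N hconv))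
    as [b [hb hble]].
  - intro n. destruct (hzs (n + N)%nat) as [a [ha [_ hval]]]. exists a. split; [exact ha |].
    specialize (hN (n + N)%nat ltac:(lia)). lra.
  - rewrite ha0 in hb. injection hb as <-. lra.
Qed.

(** Strong convexity at the midpoint: two near-maximizers are close. *)
Lemma near_maximizers_close (u : V) (s : R) (x y : V) (a b e1 e2 : R) :
  is_upper_bound (conj_values u) s -> h x = ERfin a -> h y = ERfin b ->
  s - e1 < inner u x - a -> s - e2 < inner u y - b ->
  rho / 8 * inner (vsub x y) (vsub x y) < (e1 + e2) / 2.
Proof.
  intros hs hx hy hxs hys.
  destruct (h_sc x y (1 / 2) a b ltac:(lra) hx hy) as [c [hc hcle]].
  assert (hmid := hs _ (ex_intro _ _ (ex_intro _ c (conj hc eq_refl)))).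
  rewrite (nrm_sq hV) in hcle. inner_expand hV. lra.
Qed.

Lemma maximizing_seq_cauchy (u : V) (s : R) (xs : nat -> V) :
  is_upper_bound (conj_values u) s ->
  (forall n, exists a, h (xs n) = ERfin a /\ s - / (INR n + 1) < inner u (xs n) - a) ->
  cauchy xs.
Proof.
  intros hs hxs eps he.
  destruct (inv_succ_small (rho * eps ^ 2 / 8)) as [N hN].
  { apply Rdiv_lt_0_compat; [apply Rmult_lt_0_compat; [lra | apply pow_lt; lra] | lra]. }
  exists N. intros n k hn hk.
  destruct (hxs n) as [an [hn1 hn2]]. destruct (hxs k) as [ak [hk1 hk2]].
  assert (hclose := near_maximizers_close u s _ _ _ _ _ _ hs hn1 hk1 hn2 hk2).
  pose proof (inv_succ_antitone n N hn). pose proof (inv_succ_antitone k N hk).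
  apply (nrm_lt_sq hV); [lra |].
  apply Rmult_lt_reg_l with (rho / 8); lra.
Qed.

(** By lower semicontinuity, the limit of such a sequence is a maximizer. *)
Lemma maximizing_seq_limit (u : V) (s : R) (xs : nat -> V) (x : V) :
  is_upper_bound (conj_values u) s -> converges xs x ->
  (forall n, exists a, h (xs n) = ERfin a /\ s - / (INR n + 1) < inner u (xs n) - a) ->
  exists a, conj_maximizer u x a.
Proof.
  intros hs hconv hxs.
  assert (hval : forall e, 0 < e -> exists b, h x = ERfin b /\ b <= inner u x - s + 2 * e).
  { intros e he. destruct (conv_inner hV xs x u e hconv he) as [N1 hN1].
    destruct (inv_succ_small e he) as [N2 hN2].
    apply (h_lsc (fun n => xs (n + (N1 + N2))%nat) x _ (conv_tail xs x _ hconv)).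
    intro n. destruct (hxs (n + (N1 + N2))%nat) as [a [ha hgt]]. exists a. split; [exact ha |].
    specialize (hN1 (n + (N1 + N2))%nat ltac:(lia)).
    pose proof (inv_succ_antitone (n + (N1 + N2)) N2 ltac:(lia)). lra. }
  destruct (hval 1 Rlt_0_1) as [b [hb _]].
  assert (hbs : b <= inner u x - s).
  { apply le_of_le_plus_eps. intros e he. destruct (hval (e / 2) ltac:(lra)) as [b' [hb' hle]].
    rewrite hb in hb'. injection hb' as <-. lra. }
  exists b. split; [exact hb |]. intros y a hy.
  assert (hs' := hs _ (ex_intro _ y (ex_intro _ a (conj hy eq_refl)))). lra.
Qed.

Lemma conj_attained (u : V) : exists x a, conj_maximizer u x a.
Proof.
  destruct (conj_bounded u) as [M hM].
  destruct (completeness (conj_values u)) as [s [hs hsl]].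
  - exists M. intros r [x [a [hx ->]]]. auto.
  - destruct h_proper as [x [a ha]]. exists (inner u x - a), x, a. auto.
  - assert (hnear : forall n : nat, exists x, exists a, h x = ERfin a /\
              s - / (INR n + 1) < inner u x - a).
    { intro n. apply NNPP. intro hn.
      assert (hub : is_upper_bound (conj_values u) (s - / (INR n + 1))).
      { intros r [x [a [hx ->]]]. apply Rnot_lt_le. intro hlt. apply hn. exists x, a. auto. }
      specialize (hsl _ hub). pose proof (inv_succ_pos n). lra. }
    destruct (choice _ hnear) as [xs hxs].
    destruct (hilbert_complete hV xs (maximizing_seq_cauchy u s xs hs hxs)) as [x hx].
    destruct (maximizing_seq_limit u s xs x hs hx hxs) as [a ha]. exists x, a. exact ha.
Qed.

Lemma conj_growth (u x0 : V) (a0 : R) : conj_maximizer u x0 a0 ->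
  forall x a, h x = ERfin a ->
  rho / 2 * nrm (vsub x x0) ^ 2 <= (a - inner u x) - (a0 - inner u x0).
Proof.
  intros [h0 hmax] x a hx. apply le_of_le_shrink. intros l hl.
  destruct (h_sc x x0 l a a0 hl hx h0) as [c [hc hcle]].
  assert (hm := hmax _ _ hc). inner_expand hV.
  assert (hprod : l * ((1 - l) * (rho / 2 * nrm (vsub x x0) ^ 2))
                  <= l * ((a - inner u x) - (a0 - inner u x0))) by lra.
  apply Rmult_le_reg_l with l; lra.
Qed.

Lemma fconj_at_max (u x0 : V) (a0 : R) : conj_maximizer u x0 a0 -> fconj h u = inner u x0 - a0.
Proof.
  intros [h0 hmax]. apply Rsup_eq. split.
  - intros r [x [a [hx ->]]]. auto.
  - intros b hb. apply hb. exists x0, a0. auto.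
Qed.

(** The maximizer chosen for each [u]; it is the gradient of the conjugate. *)
Definition conj_point (u : V) : V :=
  epsilon (inhabits vzero) (fun x => exists a, conj_maximizer u x a).

Lemma conj_point_spec (u : V) : exists a, conj_maximizer u (conj_point u) a.
Proof.
  unfold conj_point. apply epsilon_spec.
  destruct (conj_attained u) as [x [a ha]]. exists x, a. exact ha.
Qed.

Theorem conj_smooth : smooth_strongly_convex (fconj h) conj_point 0 (1 / rho).
Proof.
  intros u u'.
  destruct (conj_point_spec u) as [a ha]. destruct (conj_point_spec u') as [a' ha'].
  rewrite (fconj_at_max u _ _ ha), (fconj_at_max u' _ _ ha').
  assert (hlow := proj2 ha' _ _ (proj1 ha)).
  assert (hgrow := conj_growth u _ _ ha _ _ (proj1 ha')).
  assert (hyoung := young hV (vsub u' u) (vsub (conj_point u') (conj_point u)) rho rho_pos).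
  rewrite (nrm_sq hV) in hgrow. inner_expand hV.
  rewrite (inner_sym hV (conj_point u) u), (inner_sym hV (conj_point u) u') in *.
  split.
  - lra.
  - replace (1 / rho / 2 * (inner u' u' - inner u' u - (inner u u' - inner u u)))
      with ((inner u' u' - inner u' u - (inner u u' - inner u u)) / (2 * rho))
      by (field; lra).
    lra.
Qed.

End ConjugateOfStronglyConvex.

Section SmoothCalculus.
Context {V : IPS} (hV : is_real_hilbert V).

Lemma smooth_add (th1 th2 : V -> R) (G1 G2 : V -> V) (s1 s2 L1 L2 : R) :
  smooth_strongly_convex th1 G1 s1 L1 -> smooth_strongly_convex th2 G2 s2 L2 ->
  smooth_strongly_convex (fun q => th1 q + th2 q) (fun q => vadd (G1 q) (G2 q)) (s1 + s2) (L1 + L2).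
Proof.
  intros h1 h2 p q. destruct (h1 p q) as [l1 u1]. destruct (h2 p q) as [l2 u2].
  inner_expand hV. split; lra.
Qed.

Lemma smooth_sq_norm (kappa : R) :
  smooth_strongly_convex (fun q : V => kappa / 2 * nrm q ^ 2) (fun q => vscal kappa q) kappa kappa.
Proof.
  intros p q. rewrite !(nrm_sq hV). inner_expand hV. rewrite (inner_sym hV q p). split; lra.
Qed.

Lemma smooth_cocoercive (th : V -> R) (Gr : V -> V) (L : R) :
  smooth_strongly_convex th Gr 0 L -> 0 < L -> forall x y,
  inner (vsub (Gr x) (Gr y)) (vsub (Gr x) (Gr y))
    <= 2 * L * (th x - th y - inner (Gr y) (vsub x y)).
Proof.
  intros hth hL x y. set (d := vsub (Gr x) (Gr y)). set (e := vscal (/ L) d).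
  assert (hde : inner (Gr x) e - inner (Gr y) e = / L * inner d d)
    by (unfold e; inner_expand hV; unfold d; inner_expand hV; ring).
  assert (hee : inner e e = / L * / L * inner d d) by (unfold e; inner_expand hV; ring).
  clearbody e d.
  assert (hup := proj2 (hth x (vsub x e))). assert (hlow := proj1 (hth y (vsub x e))).
  inner_expand hV. rewrite (inner_sym hV e x) in hup.
  assert (hgap : / L * inner d d - L / 2 * (/ L * / L * inner d d)
                 <= th x - th y - (inner (Gr y) x - inner (Gr y) y))
    by (rewrite <- hde, <- hee; lra).
  replace (/ L * inner d d - L / 2 * (/ L * / L * inner d d)) with (inner d d / (2 * L))
    in hgap by (field; lra).
  replace (inner d d) with (2 * L * (inner d d / (2 * L))) by (field; lra).
  apply Rmult_le_compat_l; lra.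
Qed.

Lemma smooth_lsc (th : V -> R) (Gr : V -> V) (s L : R) :
  smooth_strongly_convex th Gr s L -> 0 <= s -> lsc (fun q => ERfin (th q)).
Proof.
  intros hth hs u x t hconv hbound. exists (th x). split; [reflexivity |].
  apply le_of_le_plus_eps. intros e he.
  destruct (conv_inner hV u x (vopp (Gr x)) e hconv he) as [N hN]. specialize (hN N (le_n N)).
  destruct (hbound N) as [a [ha hat]]. injection ha as hval.
  destruct (hth x (u N)) as [hlow _].
  assert (0 <= s / 2 * inner (vsub (u N) x) (vsub (u N) x))
    by (apply Rmult_le_pos; [lra | apply (inner_pos hV)]).
  inner_expand hV. lra.
Qed.

Lemma smooth_strongly_convex_interp (th : V -> R) (Gr : V -> V) (s L : R) :
  smooth_strongly_convex th Gr s L -> strongly_convex s (fun q => ERfin (th q)).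
Proof.
  intros hth x y l a b hl hx hy. injection hx as <-. injection hy as <-.
  set (z := vadd (vscal l x) (vscal (1 - l) y)).
  exists (th z). split; [reflexivity |].
  destruct (hth z x) as [hzx _]. destruct (hth z y) as [hzy _].
  assert (hlin : l * inner (Gr z) (vsub x z) + (1 - l) * inner (Gr z) (vsub y z) = 0)
    by (unfold z; inner_expand hV; ring).
  assert (hquad : l * inner (vsub x z) (vsub x z) + (1 - l) * inner (vsub y z) (vsub y z)
                  = l * (1 - l) * nrm (vsub x y) ^ 2).
  { rewrite (nrm_sq hV). unfold z. inner_expand hV. rewrite (inner_sym hV y x). ring. }
  assert (l * (th z + inner (Gr z) (vsub x z) + s / 2 * inner (vsub x z) (vsub x z)) <= l * th x)
    by (apply Rmult_le_compat_l; lra).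
  assert ((1 - l) * (th z + inner (Gr z) (vsub y z) + s / 2 * inner (vsub y z) (vsub y z))
          <= (1 - l) * th y) by (apply Rmult_le_compat_l; lra).
  assert (hs : s / 2 * l * (1 - l) * nrm (vsub x y) ^ 2
               = s / 2 * (l * inner (vsub x z) (vsub x z) + (1 - l) * inner (vsub y z) (vsub y z)))
    by (rewrite hquad; ring).
  rewrite hs. lra.
Qed.

Lemma smooth_has_minimizer (th : V -> R) (Gr : V -> V) (s L : R) :
  smooth_strongly_convex th Gr s L -> 0 < s -> exists y, forall q, th y <= th q.
Proof.
  intros hth hs.
  assert (hproper : proper (fun q => ERfin (th q))) by (exists vzero, (th vzero); reflexivity).
  destruct (conj_attained hV (fun q => ERfin (th q)) s hproper (smooth_lsc th Gr s L hth ltac:(lra))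
              hs (smooth_strongly_convex_interp th Gr s L hth) vzero) as [y [a [hy hmax]]].
  injection hy as <-. exists y. intro q. specialize (hmax q (th q) eq_refl).
  inner_expand hV. lra.
Qed.

(** At a minimizer the gradient vanishes (take a short gradient step). *)
Lemma smooth_minimizer_grad (th : V -> R) (Gr : V -> V) (s L : R) (y : V) :
  smooth_strongly_convex th Gr s L -> 0 <= L -> (forall q, th y <= th q) -> Gr y = vzero.
Proof.
  intros hth hL hmin. apply (inner_zero_eq hV).
  set (t := / (L + 1)). assert (ht : 0 < t) by (apply Rinv_0_lt_compat; lra).
  assert (hLt : L * t < 1)
    by (unfold t; apply Rmult_lt_reg_r with (L + 1); [lra | field_simplify; lra]).
  destruct (hth y (vsub y (vscal t (Gr y)))) as [_ hup].
  specialize (hmin (vsub y (vscal t (Gr y)))). inner_expand hV.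
  pose proof (inner_pos hV (Gr y)).
  assert (hstep : t * (1 - L * t / 2) * inner (Gr y) (Gr y) <= 0) by nra.
  assert (0 < t * (1 - L * t / 2)) by (apply Rmult_lt_0_compat; lra).
  nra.
Qed.

End SmoothCalculus.

Lemma smooth_comp_adjoint {U V : IPS} (hU : is_real_hilbert U) (hV : is_real_hilbert V)
  (phi : U -> R) (Gphi : U -> U) (Lphi c : R) (B : U -> V) (Bs : V -> U) :
  smooth_strongly_convex phi Gphi 0 Lphi -> 0 <= Lphi -> is_adjoint B Bs ->
  (forall p q, nrm (vsub (Bs q) (Bs p)) <= c * nrm (vsub q p)) ->
  smooth_strongly_convex (fun p => phi (Bs p)) (fun p => B (Gphi (Bs p))) 0 (Lphi * c ^ 2).
Proof.
  intros hphi hL hadj hlip p q. destruct (hphi (Bs p) (Bs q)) as [hlow hup].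
  assert (hlin : inner (Gphi (Bs p)) (vsub (Bs q) (Bs p)) = inner (B (Gphi (Bs p))) (vsub q p))
    by (rewrite (inner_subr hU), (inner_subr hV), !hadj; reflexivity).
  rewrite hlin in hlow, hup.
  assert (hsq : inner (vsub (Bs q) (Bs p)) (vsub (Bs q) (Bs p))
                <= c ^ 2 * inner (vsub q p) (vsub q p)).
  { rewrite <- (nrm_sq hU), <- (nrm_sq hV), <- Rpow_mult_distr.
    apply pow_incr. split; [apply nrm_nonneg | apply hlip]. }
  set (X := inner (vsub q p) (vsub q p)) in *.
  set (Y := inner (vsub (Bs q) (Bs p)) (vsub (Bs q) (Bs p))) in *.
  assert (Lphi / 2 * Y <= Lphi * c ^ 2 / 2 * X).
  { replace (Lphi * c ^ 2 / 2 * X) with (Lphi / 2 * (c ^ 2 * X)) by field.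
    apply Rmult_le_compat_l; lra. }
  split; lra.
Qed.

(** The Euclidean space [R^m] is a real Hilbert space. *)

Lemma fsum_ext (m : nat) (f g : Fin.t m -> R) : (forall i, f i = g i) -> fsum m f = fsum m g.
Proof. intro hfg. f_equal. apply functional_extensionality. exact hfg. Qed.

Lemma fsum_add (m : nat) (f g : Fin.t m -> R) : fsum m (fun i => f i + g i) = fsum m f + fsum m g.
Proof. induction m as [|m IH]; simpl; [ring | rewrite IH; ring]. Qed.

Lemma fsum_scal (m : nat) (a : R) (f : Fin.t m -> R) : fsum m (fun i => a * f i) = a * fsum m f.
Proof. induction m as [|m IH]; simpl; [ring | rewrite IH; ring]. Qed.

Lemma fsum_nonneg (m : nat) (f : Fin.t m -> R) : (forall i, 0 <= f i) -> 0 <= fsum m f.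
Proof.
  revert f. induction m as [|m IH]; intros f hf; simpl; [lra |].
  pose proof (hf Fin.F1). pose proof (IH (fun i => f (Fin.FS i)) (fun i => hf (Fin.FS i))). lra.
Qed.

Lemma fsum_zero (m : nat) (f : Fin.t m -> R) :
  (forall i, 0 <= f i) -> fsum m f = 0 -> forall i, f i = 0.
Proof.
  revert f. induction m as [|m IH]; intros f hf hs i; [inversion i |].
  simpl in hs. pose proof (hf Fin.F1).
  pose proof (fsum_nonneg m (fun i => f (Fin.FS i)) (fun i => hf (Fin.FS i))).
  pattern i. apply Fin.caseS'; [lra |].
  apply (IH (fun i => f (Fin.FS i))); [intro; apply hf | lra].
Qed.

Definition fhead {m : nat} (a : Euclid (S m)) : R := a Fin.F1.
Definition ftail {m : nat} (a : Euclid (S m)) : Euclid m := fun i => a (Fin.FS i).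
Definition fcons {m : nat} (a : R) (t : Euclid m) : Euclid (S m) :=
  fun i => Fin.caseS' i (fun _ => R) a t.

Lemma euclid_dist_split (m : nat) (a b : Euclid (S m)) :
  inner (vsub a b) (vsub a b)
  = (fhead a - fhead b) ^ 2 + inner (vsub (ftail a) (ftail b)) (vsub (ftail a) (ftail b)).
Proof. unfold fhead, ftail. simpl. ring. Qed.

Lemma euclid_inner_pos (m : nat) (v : Euclid m) : 0 <= inner v v.
Proof. apply fsum_nonneg. intro. apply Rle_0_sqr. Qed.

(** Completeness of [R^m], coordinate by coordinate (induction on [m]). *)
Lemma euclid_complete (m : nat) (u : nat -> Euclid m) : cauchy u -> exists x, converges u x.
Proof.
  revert u. induction m as [|m IH]; intros u hu.
  - exists vzero. intros eps he. exists O. intros. unfold nrm. simpl. rewrite sqrt_0. exact he.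
  - assert (hsplit : forall a b : Euclid (S m),
              Rabs (fhead a - fhead b) <= nrm (vsub a b) /\
              nrm (vsub (ftail a) (ftail b)) <= nrm (vsub a b)).
    { intros a b. unfold nrm. rewrite euclid_dist_split.
      pose proof (euclid_inner_pos m (vsub (ftail a) (ftail b))).
      pose proof (pow2_ge_0 (fhead a - fhead b)). split.
      - rewrite <- (sqrt_pow2 (Rabs (fhead a - fhead b))) by apply Rabs_pos.
        apply sqrt_le_1_alt. rewrite pow2_abs. lra.
      - apply sqrt_le_1_alt. lra. }
    assert (hc0 : Cauchy_crit (fun n => fhead (u n))).
    { intros eps he. destruct (hu eps he) as [N hN]. exists N. intros n k hn hk.
      specialize (hN n k hn hk). destruct (hsplit (u n) (u k)). unfold R_dist. lra. }
    assert (hct : cauchy (fun n => ftail (u n))).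
    { intros eps he. destruct (hu eps he) as [N hN]. exists N. intros n k hn hk.
      specialize (hN n k hn hk). destruct (hsplit (u n) (u k)). lra. }
    destruct (R_complete _ hc0) as [l0 hl0]. destruct (IH _ hct) as [lt hlt].
    exists (fcons l0 lt). intros eps he.
    destruct (hl0 (eps / 2) ltac:(lra)) as [N1 hN1].
    destruct (hlt (eps / 2) ltac:(lra)) as [N2 hN2].
    exists (N1 + N2)%nat. intros n hn.
    specialize (hN1 n ltac:(lia)). specialize (hN2 n ltac:(lia)). unfold R_dist in hN1.
    assert (hq := euclid_inner_pos m (vsub (ftail (u n)) lt)).
    assert (hsq : (fhead (u n) - l0) ^ 2 < (eps / 2) ^ 2).
    { rewrite <- (pow2_abs (fhead (u n) - l0)).
      pose proof (Rabs_pos (fhead (u n) - l0)). nra. }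
    assert (htl : inner (vsub (ftail (u n)) lt) (vsub (ftail (u n)) lt) < (eps / 2) ^ 2).
    { unfold nrm in hN2. rewrite <- (pow2_sqrt _ hq).
      pose proof (sqrt_pos (inner (vsub (ftail (u n)) lt) (vsub (ftail (u n)) lt))). nra. }
    unfold nrm. rewrite euclid_dist_split. change (ftail (fcons l0 lt)) with lt.
    rewrite <- (sqrt_pow2 eps) by lra. apply sqrt_lt_1_alt.
    split; [pose proof (pow2_ge_0 (fhead (u n) - fhead (fcons l0 lt))); lra |].
    change (fhead (fcons l0 lt)) with l0. lra.
Qed.

Lemma euclid_hilbert (m : nat) : is_real_hilbert (Euclid m).
Proof.
  repeat split; intros; simpl; try (apply functional_extensionality; intros; ring).
  - apply fsum_ext. intros; ring.
  - rewrite <- fsum_add. apply fsum_ext. intros; ring.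
  - rewrite <- fsum_scal. apply fsum_ext. intros; ring.
  - apply euclid_inner_pos.
  - apply functional_extensionality. intro i.
    assert (hi := fsum_zero m (fun i => x i * x i) (fun i => Rle_0_sqr (x i)) H i).
    simpl in hi. nra.
  - apply euclid_complete. assumption.
Qed.

(** Gradients in [R^m]: a function squeezed between its first-order model and
    that model plus a quadratic is differentiable, and [grad] picks the slope. *)

Section Gradient.
Variable m : nat.
Let hE := euclid_hilbert m.

Lemma vsub_add_cancel (p h : Euclid m) : vsub (vadd p h) p = h.
Proof. apply functional_extensionality. intro i. simpl. ring. Qed.

Lemma has_gradient_of_bounds (th : Euclid m -> R) (p v : Euclid m) (C : R) : 0 <= C ->
  (forall q, th p + inner v (vsub q p) <= th q) ->
  (forall q, th q <= th p + inner v (vsub q p) + C * inner (vsub q p) (vsub q p)) ->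
  has_gradient th p v.
Proof.
  intros hC hlow hup eps he. exists (eps / (C + 1)). split; [apply Rdiv_lt_0_compat; lra |].
  intros h [hpos hsmall].
  specialize (hlow (vadd p h)). specialize (hup (vadd p h)).
  rewrite vsub_add_cancel in hlow, hup. rewrite <- (nrm_sq hE) in hup.
  assert (nrm h * (C + 1) < eps).
  { apply Rmult_lt_reg_r with (/ (C + 1)); [apply Rinv_0_lt_compat; lra |].
    rewrite Rmult_assoc, Rinv_r by lra. lra. }
  assert (C * nrm h ^ 2 <= eps * nrm h) by nra.
  apply Rabs_le. split; lra.
Qed.

(** Gradients are unique: two slopes differing by [d] disagree by [t|d|^2]
    along [t d], which is not [o(t)]. *)
Lemma gradient_unique (th : Euclid m -> R) (p v v' : Euclid m) :
  has_gradient th p v -> has_gradient th p v' -> v = v'.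
Proof.
  intros h1 h2. set (d := vsub v v').
  destruct (Req_dec (nrm d) 0) as [hd | hd].
  - apply (nrm_eq0 hE) in hd. unfold d in hd. apply functional_extensionality. intro i.
    assert (e := f_equal (fun f => f i) hd). simpl in e. lra.
  - exfalso. pose proof (nrm_nonneg d). assert (hd' : 0 < nrm d) by lra.
    destruct (h1 (nrm d / 4)) as [d1 [hd1 hh1]]; [lra |].
    destruct (h2 (nrm d / 4)) as [d2 [hd2 hh2]]; [lra |].
    set (r := Rmin d1 d2). assert (hr : 0 < r) by (apply Rmin_pos; lra).
    assert (hr1 : r <= d1) by apply Rmin_l. assert (hr2 : r <= d2) by apply Rmin_r.
    set (t := r / (2 * nrm d)). assert (ht : 0 < t) by (apply Rdiv_lt_0_compat; lra).
    set (h := vscal t d).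
    assert (hn : nrm h = t * nrm d) by (unfold h; rewrite (nrm_scal hE), Rabs_right; lra).
    assert (hnr : t * nrm d = r / 2) by (unfold t; field; lra).
    specialize (hh1 h ltac:(lra)). specialize (hh2 h ltac:(lra)).
    set (A := th (vadd p h) - th p) in *.
    assert (hdiff : inner v h - inner v' h <= nrm d / 2 * nrm h).
    { pose proof (Rle_abs (A - inner v' h)). pose proof (Rle_abs (- (A - inner v h))).
      rewrite Rabs_Ropp in *. lra. }
    assert (hvh : inner v h - inner v' h = t * nrm d ^ 2).
    { unfold h, d. rewrite (nrm_sq hE). inner_expand hE. rewrite (inner_sym hE v' v). ring. }
    rewrite hvh, hn in hdiff.
    assert (0 < t * nrm d) by (apply Rmult_lt_0_compat; lra). nra.
Qed.

Lemma grad_eq (th : Euclid m -> R) (p v : Euclid m) : has_gradient th p v -> grad th p = v.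
Proof.
  intro hv. apply (gradient_unique th p); [| exact hv].
  unfold grad. apply epsilon_spec. exists v. exact hv.
Qed.

Lemma smooth_grad (th : Euclid m -> R) (Gr : Euclid m -> Euclid m) (s L : R) :
  smooth_strongly_convex th Gr s L -> 0 <= s -> 0 <= L -> forall p, grad th p = Gr p.
Proof.
  intros hth hs hL p. apply grad_eq. apply has_gradient_of_bounds with (C := L / 2); [lra | |].
  - intro q. destruct (hth p q) as [hlow _].
    assert (0 <= s / 2 * inner (vsub q p) (vsub q p))
      by (apply Rmult_le_pos; [lra | apply (inner_pos hE)]).
    lra.
  - intro q. exact (proj2 (hth p q)).
Qed.

End Gradient.

Section BoundedOperator.
Context {U V : IPS} (hU : is_real_hilbert U) (hV : is_real_hilbert V) (A : U -> V).
Hypotheses (hA_lin : linear_map A) (hA_cont : continuous_map A).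

(** Linear maps fix the origin ([A 0 = A 0 + A 0]). *)
Lemma linear_map_zero : A vzero = vzero.
Proof.
  apply (self_add_zero hV). destruct hA_lin as [hadd _]. destruct hU as (_&_&hz&_).
  rewrite <- hadd, hz. reflexivity.
Qed.

Definition unit_ball_image (r : R) : Prop := exists x : U, nrm x <= 1 /\ r = nrm (A x).

(** Continuity at 0 rules out unit vectors with arbitrarily large images. *)
Lemma unit_ball_image_bounded : bound unit_ball_image.
Proof.
  apply NNPP. intro hnb.
  assert (hbig : forall n : nat, exists x : U, nrm x <= 1 /\ INR n + 1 < nrm (A x)).
  { intro n. apply NNPP. intro hn. apply hnb. exists (INR n + 1). intros r [x [hx ->]].
    apply Rnot_lt_le. intro hlt. apply hn. exists x. auto. }
  destruct (choice _ hbig) as [xs hxs].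
  set (u := fun n => vscal (/ (INR n + 1)) (xs n)).
  assert (hscal : forall n, 0 <= / (INR n + 1)) by (intro; left; apply inv_succ_pos).
  assert (hconv : converges u vzero).
  { intros eps he. destruct (inv_succ_small eps he) as [N hN]. exists N. intros n hn.
    unfold u. rewrite (nrm_sub_zero hU), (nrm_scal hU), Rabs_right by (apply Rle_ge, hscal).
    pose proof (inv_succ_antitone n N hn). destruct (hxs n) as [hx1 _].
    assert (/ (INR n + 1) * nrm (xs n) <= / (INR n + 1) * 1)
      by (apply Rmult_le_compat_l; [apply hscal | exact hx1]).
    lra. }
  destruct (hA_cont u vzero hconv 1 Rlt_0_1) as [N hN]. specialize (hN N (le_n N)).
  rewrite linear_map_zero, (nrm_sub_zero hV) in hN. unfold u in hN.
  destruct hA_lin as [_ hscalA]. rewrite hscalA, (nrm_scal hV), Rabs_right in hN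
    by (apply Rle_ge, hscal).
  destruct (hxs N) as [_ hlarge]. pose proof (inv_succ_pos N).
  assert (/ (INR N + 1) * (INR N + 1) < / (INR N + 1) * nrm (A (xs N)))
    by (apply Rmult_lt_compat_l; assumption).
  rewrite Rinv_l in *; [lra | pose proof (pos_INR N); lra].
Qed.

Lemma op_norm_lub : is_lub unit_ball_image (op_norm A).
Proof.
  destruct (completeness unit_ball_image unit_ball_image_bounded) as [s hs].
  - exists (nrm (A vzero)), vzero. split; [rewrite (nrm_zero hU); lra | reflexivity].
  - unfold op_norm. fold unit_ball_image. rewrite (Rsup_eq _ s hs). exact hs.
Qed.

Lemma op_norm_nonneg : 0 <= op_norm A.
Proof.
  apply Rle_trans with (nrm (A vzero)); [apply nrm_nonneg |].
  apply (proj1 op_norm_lub). exists vzero. split; [rewrite (nrm_zero hU); lra | reflexivity].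
Qed.

(** [|A x| <= |A| |x|], by scaling [x] to the unit sphere. *)
Lemma op_norm_bound (x : U) : nrm (A x) <= op_norm A * nrm x.
Proof.
  destruct (Req_dec (nrm x) 0) as [h0 | h0].
  - rewrite (nrm_eq0 hU x h0), linear_map_zero, (nrm_zero hV), (nrm_zero hU). lra.
  - pose proof (nrm_nonneg x). assert (hx : 0 < nrm x) by lra.
    assert (hinv : 0 < / nrm x) by (apply Rinv_0_lt_compat; exact hx).
    destruct hA_lin as [_ hscalA].
    assert (hunit : / nrm x * nrm (A x) <= op_norm A).
    { apply (proj1 op_norm_lub). exists (vscal (/ nrm x) x).
      rewrite hscalA, (nrm_scal hV), (nrm_scal hU), Rabs_right by lra.
      split; [rewrite Rinv_l; lra | reflexivity]. }
    apply Rmult_le_reg_l with (/ nrm x); [exact hinv |].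
    rewrite <- Rmult_assoc, (Rmult_comm (/ nrm x) (op_norm A)), Rmult_assoc, Rinv_l; lra.
Qed.

Lemma adjoint_lipschitz (As : V -> U) : is_adjoint A As ->
  forall p q, nrm (vsub (As q) (As p)) <= op_norm A * nrm (vsub q p).
Proof.
  intros hAs p q. set (z := vsub (As q) (As p)).
  assert (hzz : nrm z ^ 2 = inner (A z) (vsub q p)).
  { rewrite (nrm_sq hU). unfold z at 2. rewrite (inner_subr hU), (inner_subr hV), !hAs.
    reflexivity. }
  assert (hcs := cauchy_schwarz hV (A z) (vsub q p)).
  assert (hAz := op_norm_bound z).
  pose proof (nrm_nonneg (vsub q p)). pose proof (nrm_nonneg z). pose proof op_norm_nonneg.
  assert (nrm z ^ 2 <= op_norm A * nrm z * nrm (vsub q p)).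
  { rewrite hzz. apply Rle_trans with (1 := hcs). apply Rmult_le_compat_r; assumption. }
  destruct (Req_dec (nrm z) 0) as [h0 | h0].
  - rewrite h0. apply Rmult_le_pos; assumption.
  - apply Rmult_le_reg_l with (nrm z); [lra | nra].
Qed.

End BoundedOperator.

(** The fast gradient method for a [kappa]-strongly convex, [L]-smooth
    function on [R^m] converges linearly with ratio [1 - sqrt(kappa/L)]. *)

(** Here [y] is
    the extrapolated point, [x = (1+a) y - a v] the previous iterate,
    [x' = y - a h] the gradient step (the gradient at [y] being [L a h]) and
    [v' = a y + (1-a) v - h] the next auxiliary point; given the upper model
    at [x'] and the lower models at [x] and [z], the quantity
    [F x - F z + k/2 |v - z|^2] contracts by the factor [1 - a]. *)
Lemma fgm_step_contraction {V : IPS} (hV : is_real_hilbert V) (x x' y v v' gy hh z : V)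
  (Fx Fx' Fy Fz a L k : R) :
  0 < a < 1 -> 0 < L -> k = L * a ^ 2 ->
  x = vsub (vscal (1 + a) y) (vscal a v) ->
  x' = vsub y (vscal a hh) ->
  v' = vsub (vadd (vscal a y) (vscal (1 - a) v)) hh ->
  gy = vscal (L * a) hh ->
  Fx' <= Fy + inner gy (vsub x' y) + L / 2 * inner (vsub x' y) (vsub x' y) ->
  Fy + inner gy (vsub x y) + k / 2 * inner (vsub x y) (vsub x y) <= Fx ->
  Fy + inner gy (vsub z y) + k / 2 * inner (vsub z y) (vsub z y) <= Fz ->
  Fx' - Fz + k / 2 * inner (vsub v' z) (vsub v' z)
    <= (1 - a) * (Fx - Fz + k / 2 * inner (vsub v z) (vsub v z)).
Proof.
  intros ha hL -> -> -> -> -> hup hx hz.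
  assert (hyv := inner_pos hV (vsub y v)).
  pose proof (pow2_ge_0 a).
  assert (c1 : 0 <= (1 - a) * (L * a ^ 2 / 2) * a ^ 2) by (repeat apply Rmult_le_pos; lra).
  assert (c2 : 0 <= a * (1 - a) * (L * a ^ 2 / 2)) by (repeat apply Rmult_le_pos; lra).
  assert (P1 := Rmult_le_pos _ _ c1 hyv). assert (P2 := Rmult_le_pos _ _ c2 hyv).
  apply (Rmult_le_compat_l (1 - a)) in hx; [| lra].
  apply (Rmult_le_compat_l a) in hz; [| lra].
  inner_expand hV.
  rewrite (inner_sym hV v y), (inner_sym hV hh y), (inner_sym hV z y), (inner_sym hV hh v),
    (inner_sym hV z v), (inner_sym hV z hh) in *.
  lra.
Qed.

Section FastGradientMethod.
Variables (m : nat) (F : Euclid m -> R) (GF : Euclid m -> Euclid m) (kappa L : R).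
Hypotheses (hF : smooth_strongly_convex F GF kappa L) (hk : 0 < kappa) (hkL : kappa < L).
Variables (p w : nat -> Euclid m).
Hypotheses (hp0 : p O = vzero) (hw0 : w O = vzero)
  (hpS : forall k, p (S k) = vsub (w k) (vscal (1 / L) (GF (w k))))
  (hwS : forall k, w (S k) = vadd (p (S k))
           (vscal ((sqrt L - sqrt kappa) / (sqrt L + sqrt kappa)) (vsub (p (S k)) (p k)))).

Let hE := euclid_hilbert m.

Ltac vector_ext :=
  apply functional_extensionality; let i := fresh "i" in intro i; unfold vsub; simpl.

Definition fgm_rate : R := sqrt (kappa / L).

Lemma fgm_rate_facts :
  0 < fgm_rate < 1 /\ L * fgm_rate ^ 2 = kappa /\
  (sqrt L - sqrt kappa) / (sqrt L + sqrt kappa) = (1 - fgm_rate) / (1 + fgm_rate).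
Proof.
  assert (hq : 0 < kappa / L < 1).
  { split; [apply Rdiv_lt_0_compat; lra |].
    apply Rmult_lt_reg_r with L; [lra |]. field_simplify; lra. }
  unfold fgm_rate. split; [| split].
  - split; [apply sqrt_lt_R0; lra |]. rewrite <- sqrt_1. apply sqrt_lt_1_alt. lra.
  - rewrite pow2_sqrt by lra. field. lra.
  - rewrite sqrt_div_alt by lra.
    assert (0 < sqrt L) by (apply sqrt_lt_R0; lra).
    assert (0 < sqrt kappa) by (apply sqrt_lt_R0; lra).
    field. split; lra.
Qed.

(** The auxiliary sequence [v_k] of the estimate-sequence analysis. *)
Definition fgm_aux (k : nat) : Euclid m :=
  match k with
  | O => vzero
  | S k' => vadd (p k') (vscal (1 / fgm_rate) (vsub (p (S k')) (p k')))
  end.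

Lemma fgm_iterate_form (k : nat) :
  p k = vsub (vscal (1 + fgm_rate) (w k)) (vscal fgm_rate (fgm_aux k)).
Proof.
  destruct fgm_rate_facts as ([ha0 ha1] & _ & hratio).
  destruct k as [|k].
  - rewrite hp0, hw0. simpl fgm_aux. vector_ext. ring.
  - rewrite hwS, hratio. simpl fgm_aux. vector_ext. field. split; lra.
Qed.

Definition fgm_lyapunov (k : nat) (z : Euclid m) : R :=
  F (p k) - F z + kappa / 2 * inner (vsub (fgm_aux k) z) (vsub (fgm_aux k) z).

Lemma fgm_lyapunov_step (k : nat) (z : Euclid m) :
  fgm_lyapunov (S k) z <= (1 - fgm_rate) * fgm_lyapunov k z.
Proof.
  destruct fgm_rate_facts as ([ha0 ha1] & hLa & _).
  assert (hxk := fgm_iterate_form k).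
  set (a := fgm_rate) in *.
  set (hh := vscal (1 / (L * a)) (GF (w k))).
  assert (hx' : p (S k) = vsub (w k) (vscal a hh))
    by (rewrite hpS; unfold hh; vector_ext; field; split; lra).
  assert (hv' : fgm_aux (S k) = vsub (vadd (vscal a (w k)) (vscal (1 - a) (fgm_aux k))) hh).
  { change (fgm_aux (S k)) with (vadd (p k) (vscal (1 / a) (vsub (p (S k)) (p k)))).
    rewrite hx', hxk. vector_ext. field. lra. }
  assert (hg : GF (w k) = vscal (L * a) hh) by (unfold hh; vector_ext; field; split; lra).
  unfold fgm_lyapunov.
  apply (fgm_step_contraction hE (p k) (p (S k)) (w k) (fgm_aux k) (fgm_aux (S k)) (GF (w k)) hh z
           (F (p k)) (F (p (S k))) (F (w k)) (F z) a L kappa (conj ha0 ha1) ltac:(lra)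
           (eq_sym hLa) hxk hx' hv' hg).
  - exact (proj2 (hF (w k) (p (S k)))).
  - exact (proj1 (hF (w k) (p k))).
  - exact (proj1 (hF (w k) z)).
Qed.

Lemma fgm_lyapunov_decay (k : nat) (z : Euclid m) :
  fgm_lyapunov k z <= (1 - fgm_rate) ^ k * fgm_lyapunov O z.
Proof.
  destruct fgm_rate_facts as ([ha0 ha1] & _ & _).
  induction k as [|k IH]; [simpl; lra |].
  apply Rle_trans with ((1 - fgm_rate) * fgm_lyapunov k z); [apply fgm_lyapunov_step |].
  simpl. rewrite Rmult_assoc. apply Rmult_le_compat_l; lra.
Qed.

Theorem fgm_convergence (z : Euclid m) (k : nat) :
  F (p k) - F z <= (1 - sqrt (kappa / L)) ^ k * (F vzero - F z + kappa / 2 * nrm z ^ 2).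
Proof.
  assert (hdec := fgm_lyapunov_decay k z). unfold fgm_lyapunov in hdec.
  rewrite hp0 in hdec. change (fgm_aux O) with (@vzero (Euclid m)) in hdec.
  replace (inner (vsub vzero z) (vsub vzero z)) with (nrm z ^ 2) in hdec
    by (rewrite (nrm_sq hE); inner_expand hE; ring).
  assert (0 <= kappa / 2 * inner (vsub (fgm_aux k) z) (vsub (fgm_aux k) z))
    by (apply Rmult_le_pos; [lra | apply (inner_pos hE)]).
  unfold fgm_rate in hdec. lra.
Qed.

End FastGradientMethod.

(** Bounds for the fast gradient method on the Tikhonov regularization
    [th + kappa/2 |.|^2] of a convex [Lth]-smooth function [th] with
    minimizer [pstar], transferred back to [th]. *)

Lemma nrm_stationary {V : IPS} (hV : is_real_hilbert V) (a b : V) (k : R) :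
  0 <= k -> vadd a (vscal k b) = vzero -> nrm a = k * nrm b.
Proof.
  intros hk hab.
  assert (h1 := f_equal (fun v => inner v a) hab). assert (h2 := f_equal (fun v => inner v b) hab).
  simpl in h1, h2. rewrite <- (Rabs_pos_eq k hk), <- (nrm_scal hV).
  unfold nrm. f_equal. inner_expand hV. rewrite (inner_sym hV b a) in *. nra.
Qed.

Definition regularize {V : IPS} (th : V -> R) (kappa : R) (y : V) : R :=
  th y + kappa / 2 * nrm y ^ 2.

Section RegularizedBounds.
Context {V : IPS} (hV : is_real_hilbert V) (th : V -> R) (Gth : V -> V) (Lth kappa : R).
Hypotheses (hth : smooth_strongly_convex th Gth 0 Lth) (hL : 0 < Lth) (hk : 0 < kappa).
Variables (pstar : V) (Rr : R).
Hypotheses (hopt : forall y, th pstar <= th y) (hpR : nrm pstar <= Rr).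
Variables (x : V) (q : R).
(** [x] is [q]-optimal for the regularized problem, in the sense of the
    convergence estimate of the fast gradient method. *)
Hypotheses (hq : 0 <= q) (hgap : forall z, regularize th kappa x - regularize th kappa z
  <= q * (regularize th kappa vzero - regularize th kappa z + kappa / 2 * nrm z ^ 2)).

Lemma regularize_zero : regularize th kappa vzero = th vzero.
Proof. unfold regularize. rewrite (nrm_zero hV). ring. Qed.

Lemma regularized_objective_bound :
  th x - th pstar <= kappa / 2 * Rr ^ 2 + q * (th vzero - th pstar).
Proof.
  assert (hp := hgap pstar). rewrite regularize_zero in hp. unfold regularize in hp.
  assert (hx : 0 <= kappa / 2 * nrm x ^ 2) by (apply Rmult_le_pos; [lra | apply pow2_ge_0]).
  assert (kappa / 2 * nrm pstar ^ 2 <= kappa / 2 * Rr ^ 2)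
    by (apply Rmult_le_compat_l; [lra | apply sq_nrm_le, hpR]).
  replace (q * (th vzero - (th pstar + kappa / 2 * nrm pstar ^ 2) + kappa / 2 * nrm pstar ^ 2))
    with (q * (th vzero - th pstar)) in hp by ring.
  lra.
Qed.

Lemma regularized_minimizer : exists y,
  (forall z, regularize th kappa y <= regularize th kappa z) /\
  vadd (Gth y) (vscal kappa y) = vzero /\ nrm y <= Rr.
Proof.
  assert (hF := smooth_add hV _ _ _ _ _ _ _ _ hth (smooth_sq_norm hV kappa)).
  destruct (smooth_has_minimizer hV _ _ _ _ hF ltac:(lra)) as [y hy].
  exists y. split; [exact hy | split].
  - exact (smooth_minimizer_grad hV _ _ _ _ y hF ltac:(lra) hy).
  - assert (hcmp := hy pstar). pose proof (hopt y).
    assert (nrm y ^ 2 <= nrm pstar ^ 2) by nra.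
    apply Rle_trans with (nrm pstar); [| exact hpR].
    pose proof (nrm_nonneg y). pose proof (nrm_nonneg pstar). nra.
Qed.

Lemma linearization_gap_at_stationary (y : V) : vadd (Gth y) (vscal kappa y) = vzero ->
  th x - th y - inner (Gth y) (vsub x y) <= regularize th kappa x - regularize th kappa y.
Proof.
  intro hGy. assert (h := f_equal (fun v => inner v (vsub x y)) hGy). simpl in h.
  unfold regularize. rewrite !(nrm_sq hV). pose proof (inner_pos hV (vsub x y)).
  inner_expand hV. rewrite (inner_sym hV y x) in *. nra.
Qed.

(** Comparing [x] with the regularized minimizer [y] through cocoercivity
    bounds the gradient of [th] at [x]. *)
Lemma regularized_gradient_bound :
  nrm (Gth x) <= sqrt (2 * Lth * q * (th vzero - th pstar)) + kappa * Rr.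
Proof.
  destruct regularized_minimizer as [y [_ [hGy hyR]]].
  assert (hxy : regularize th kappa x - regularize th kappa y <= q * (th vzero - th y)).
  { assert (h := hgap y). rewrite regularize_zero in h.
    replace (q * (th vzero - regularize th kappa y + kappa / 2 * nrm y ^ 2))
      with (q * (th vzero - th y)) in h by (unfold regularize; ring).
    exact h. }
  assert (hD : q * (th vzero - th y) <= q * (th vzero - th pstar))
    by (apply Rmult_le_compat_l; [exact hq | pose proof (hopt y); lra]).
  assert (hdiff : nrm (vsub (Gth x) (Gth y)) <= sqrt (2 * Lth * q * (th vzero - th pstar))).
  { unfold nrm. apply sqrt_le_1_alt.
    replace (2 * Lth * q * (th vzero - th pstar)) with (2 * Lth * (q * (th vzero - th pstar)))
      by ring.
    apply Rle_trans with (1 := smooth_cocoercive hV _ _ _ hth hL x y).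
    assert (hlin := linearization_gap_at_stationary y hGy).
    apply Rmult_le_compat_l; lra. }
  pose proof (nrm_sub_triangle hV (Gth x) (Gth y)).
  rewrite (nrm_stationary hV (Gth y) y kappa ltac:(lra) hGy) in *.
  assert (kappa * nrm y <= kappa * Rr) by (apply Rmult_le_compat_l; lra).
  lra.
Qed.

End RegularizedBounds.

Lemma opp_adjoint {V : IPS} (hV : is_real_hilbert V) : is_adjoint (@vopp V) (@vopp V).
Proof. intros x p. inner_expand hV. reflexivity. Qed.

Lemma opp_isometry {V : IPS} (hV : is_real_hilbert V) (p q : V) :
  nrm (vsub (vopp q) (vopp p)) <= 1 * nrm (vsub q p).
Proof. rewrite Rmult_1_l. right. unfold nrm. f_equal. inner_expand hV. ring. Qed.

Lemma smoothness_constant_pos (c rho mu : R) : 0 < rho -> 0 < mu -> 0 < c ^ 2 / rho + 1 / mu.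
Proof.
  intros hrho hmu.
  assert (0 <= c ^ 2 / rho)
    by (unfold Rdiv; apply Rmult_le_pos; [apply pow2_ge_0 | left; apply Rinv_0_lt_compat; lra]).
  assert (0 < 1 / mu) by (apply Rdiv_lt_0_compat; lra). lra.
Qed.

Definition dual_grad {H : IPS} {m : nat} (f : H -> ER) (g : Euclid m -> ER)
  (A : H -> Euclid m) (As : Euclid m -> H) (p : Euclid m) : Euclid m :=
  vadd (A (conj_point f (As p))) (vopp (conj_point g (vopp p))).

(** [theta] is convex and [(|A|^2/rho + 1/mu)]-smooth: the two conjugates are
    smooth, precomposed with [A*] (Lipschitz constant [|A|]) and with [-id]. *)
Lemma dual_smooth (H : IPS) (m : nat) (f : H -> ER) (g : Euclid m -> ER)
  (A : H -> Euclid m) (As : Euclid m -> H) (rho mu : R) (hH : is_real_hilbert H)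
  (hfp : proper f) (hfl : lsc f) (hrho : 0 < rho) (hfs : strongly_convex rho f)
  (hgp : proper g) (hgl : lsc g) (hmu : 0 < mu) (hgs : strongly_convex mu g)
  (hAl : linear_map A) (hAc : continuous_map A) (hAs : is_adjoint A As) :
  smooth_strongly_convex (theta f g As) (dual_grad f g A As) 0 (op_norm A ^ 2 / rho + 1 / mu).
Proof.
  assert (hE := euclid_hilbert m).
  assert (hf := smooth_comp_adjoint hH hE _ _ _ _ A As (conj_smooth hH f rho hfp hfl hrho hfs)
                  ltac:(unfold Rdiv; apply Rmult_le_pos; [lra | left; apply Rinv_0_lt_compat; lra])
                  hAs (adjoint_lipschitz hH hE A hAl hAc As hAs)).
  assert (hg := smooth_comp_adjoint hE hE _ _ _ _ vopp vopp (conj_smooth hE g mu hgp hgl hmu hgs)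
                  ltac:(unfold Rdiv; apply Rmult_le_pos; [lra | left; apply Rinv_0_lt_compat; lra])
                  (opp_adjoint hE) (opp_isometry hE)).
  assert (hsum := smooth_add hE _ _ _ _ _ _ _ _ hf hg).
  replace (0 + 0) with 0 in hsum by ring.
  replace (1 / rho * op_norm A ^ 2 + 1 / mu * 1 ^ 2) with (op_norm A ^ 2 / rho + 1 / mu) in hsum
    by (field; lra).
  exact hsum.
Qed.

Lemma dual_fgm_convergence (H : IPS) (m : nat) (f : H -> ER) (g : Euclid m -> ER)
  (A : H -> Euclid m) (As : Euclid m -> H) (rho mu : R) (hH : is_real_hilbert H)
  (hfp : proper f) (hfl : lsc f) (hrho : 0 < rho) (hfs : strongly_convex rho f)
  (hgp : proper g) (hgl : lsc g) (hmu : 0 < mu) (hgs : strongly_convex mu g)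
  (hAl : linear_map A) (hAc : continuous_map A) (hAs : is_adjoint A As)
  (kappa : R) (hk : 0 < kappa) (p w : nat -> Euclid m)
  (hfgm : fgm_iterates f g A As rho mu kappa p w) (z : Euclid m) (k : nat) :
  regularize (theta f g As) kappa (p k) - regularize (theta f g As) kappa z
  <= (1 - sqrt (kappa / Lk A rho mu kappa)) ^ k
     * (regularize (theta f g As) kappa vzero - regularize (theta f g As) kappa z
        + kappa / 2 * nrm z ^ 2).
Proof.
  assert (hE := euclid_hilbert m).
  assert (hLp := smoothness_constant_pos (op_norm A) rho mu hrho hmu).
  assert (htheta :=
    dual_smooth H m f g A As rho mu hH hfp hfl hrho hfs hgp hgl hmu hgs hAl hAc hAs).
  assert (hF := smooth_add hE _ _ _ _ _ _ _ _ htheta (smooth_sq_norm hE kappa)).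
  rewrite Rplus_0_l in hF.
  destruct hfgm as (hp0 & hw0 & hpS & hwS).
  apply (fgm_convergence m _ _ kappa _ hF hk ltac:(unfold Lk; lra) p w hp0 hw0); [| exact hwS].
  intro j. rewrite hpS, (smooth_grad m _ _ _ _ hF); [reflexivity | lra | unfold Lk; lra].
Qed.

Theorem mainTheorem8 (H : IPS) (m : nat)
  (f : H -> ER) (g : Euclid m -> ER) (A : H -> Euclid m) (As : Euclid m -> H)
  (rho mu : R)
  (hH : is_real_hilbert H)
  (hfp : proper f) (hfc : convex f) (hfl : lsc f) (hfb : bounded_dom f)
  (hrho : 0 < rho) (hfs : strongly_convex rho f)
  (hgp : proper g) (hgl : lsc g) (hmu : 0 < mu) (hgs : strongly_convex mu g)
  (hAl : linear_map A) (hAc : continuous_map A) (hAs : is_adjoint A As)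
  (hdom : exists x, dom f x /\ dom g (A x))
  (pstar : Euclid m) (Rr : R)
  (hopt : forall p, theta f g As pstar <= theta f g As p)
  (hR : 0 < Rr) (hpR : nrm pstar <= Rr)
  (kappa : R) (hk : 0 < kappa)
  (p w : nat -> Euclid m)
  (hfgm : fgm_iterates f g A As rho mu kappa p w) :
  forall k : nat,
    theta f g As (p k) - theta f g As pstar <=
      kappa / 2 * Rr ^ 2
      + 25 / 8 * (theta f g As vzero - theta f g As pstar)
        * exp (- (INR k / 2) * sqrt (kappa / Lk A rho mu kappa))
    /\
    nrm (grad (theta f g As) (p k)) <=
      2 * sqrt (Lk A rho mu kappa * (theta f g As vzero - theta f g As pstar))
        * exp (- (INR k / 2) * sqrt (kappa / Lk A rho mu kappa))
      + 2 * kappa * Rr.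
Proof.
  intro k. pose proof (euclid_hilbert m) as hE.
  assert (hLp := smoothness_constant_pos (op_norm A) rho mu hrho hmu).
  assert (htheta :=
    dual_smooth H m f g A As rho mu hH hfp hfl hrho hfs hgp hgl hmu hgs hAl hAc hAs).
  assert (hgap := fun z => dual_fgm_convergence H m f g A As rho mu hH hfp hfl hrho hfs hgp hgl
                             hmu hgs hAl hAc hAs kappa hk p w hfgm z k).
  set (a := sqrt (kappa / Lk A rho mu kappa)) in *.
  assert (ha : 0 <= a <= 1) by exact (sqrt_ratio_unit kappa _ hk hLp).
  destruct (rate_le_exp a k ha) as [hqE hE2].
  set (E := exp (- (INR k / 2) * a)) in *. pose proof (exp_pos (- (INR k / 2) * a)).
  pose proof (pow_le (1 - a) k ltac:(lra)) as hq.
  assert (hD : 0 <= theta f g As vzero - theta f g As pstar) by (pose proof (hopt vzero); lra).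
  split.
  - assert (hobj := regularized_objective_bound hE (theta f g As) kappa hk pstar Rr hpR _ _ hgap).
    assert ((1 - a) ^ k * (theta f g As vzero - theta f g As pstar)
            <= E * (theta f g As vzero - theta f g As pstar)) by (apply Rmult_le_compat_r; lra).
    nra.
  - rewrite (smooth_grad m _ _ _ _ htheta ltac:(lra) ltac:(lra)).
    assert (hgr := regularized_gradient_bound hE _ _ _ kappa htheta hLp hk pstar Rr hopt hpR
                     _ _ hq hgap).
    assert (hsq := sqrt_rate_bound (op_norm A ^ 2 / rho + 1 / mu) (Lk A rho mu kappa)
                     ((1 - a) ^ k) E
                     (theta f g As vzero - theta f g As pstar)
                     ltac:(unfold Lk; lra) ltac:(lra) ltac:(lra) hD).
    assert (0 <= kappa * Rr) by (apply Rmult_le_pos; lra).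
    lra.
Qed.
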